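(* Let $G$ be a divisible abelian group (in particular $G$ is nontrivial). Then $Spec_R(G)=\{1,\infty\}$.
   Context: A group $G$ is divisible if for every $x\in G$ and every positive integer $k$ there is $y\in G$ with $y^k=x$ (here the trivial group is excluded, so divisible groups are infinite). For an endomorphism $\varphi$ of $G$, $x,y$ are $\varphi$-conjugated if $x=zy\varphi(z)^{-1}$ for some $z\in G$; $R(\varphi)\in\mathbb{N}\cup\{\infty\}$ is the number of $\varphi$-conjugacy classes (all infinite cardinals identified with $\infty$). $Spec_R(G)=\{R(\varphi)\mid\varphi\in{\rm Aut}(G)\}$. *)

(* An abelian group is a zmodType (written additively). *)
From HB Require Import structures.
From mathcomp Require Import all_boot all_order all_algebra.
Set Implicit Arguments. Unset Strict Implicit. Unset Printing Implicit Defensive.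
Import GRing.Theory.
Local Open Scope ring_scope.

Definition divisible (G : zmodType) : Prop :=
  forall (x : G) (k : nat), (0 < k)%N -> exists y : G, y *+ k = x.

Definition nontrivial (G : zmodType) : Prop := exists x : G, x != 0.

Definition is_automorphism (G : zmodType) (phi : G -> G) : Prop :=
  (forall x y : G, phi (x + y) = phi x + phi y) /\ bijective phi.

(* x and y are phi-conjugated: x = z + y - phi z for some z (additive form of z y phi(z)^-1) *)
Definition twisted_conj (G : zmodType) (phi : G -> G) (x y : G) : Prop :=
  exists z : G, x = z + y - phi z.

Definition pairwise_nonconj (G : zmodType) (phi : G -> G) (s : seq G) : Prop :=
  forall i j : nat, (i < size s)%N -> (j < size s)%N ->
    twisted_conj phi (nth 0 s i) (nth 0 s j) -> i = j.

(* Reidemeister number: [reidemeister phi (Some n)] means R(phi) = n (finite),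
   [reidemeister phi None] means R(phi) = infinity (infinitely many classes). *)
Definition reidemeister (G : zmodType) (phi : G -> G) (r : option nat) : Prop :=
  match r with
  | Some n => exists s : seq G, size s = n /\ pairwise_nonconj phi s /\
                forall x : G, exists2 y, y \in s & twisted_conj phi x y
  | None => forall n : nat, exists s : seq G, size s = n /\ pairwise_nonconj phi s
  end.

Definition SpecR (G : zmodType) (r : option nat) : Prop :=
  exists phi : G -> G, is_automorphism phi /\ reidemeister phi r.

From mathcomp Require Import all_boot all_order all_algebra.
From Stdlib Require Import Classical ClassicalEpsilon.
Set Implicit Arguments.
Unset Strict Implicit.
Import GRing.Theory.
Local Open Scope ring_scope.

(* Two elements are phi-conjugate iff their difference lies in the image of
   1 - phi, a subgroup of G.  If there are finitely many classes this subgroup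
   has finite index, and a subgroup of finite index n of a divisible group is
   everything: among 0, y, ..., n y two multiples share a coset, so some m y
   with 0 < m <= n is in the subgroup, and every x is (n!/m) (m y) for y with
   n! y = x.  Hence R(phi) is 1 or infinite.  Both values occur: R(-1) = 1
   because G is 2-divisible, and R(1) is the cardinality of G, which is
   infinite since {0} is a subgroup of infinite index. *)

Section FiniteIndexSubgroup.

Variable G : zmodType.
Variable H : G -> Prop.
Hypothesis H0 : H 0.
Hypothesis HB : forall a b, H a -> H b -> H (a - b).

Lemma subgroupN a : H a -> H (- a).
Proof. by move=> Ha; rewrite -sub0r; apply: HB. Qed.

Lemma subgroupD a b : H a -> H b -> H (a + b).
Proof. by move=> Ha Hb; rewrite -[b]opprK; apply/HB/subgroupN. Qed.

Lemma subgroupMn a k : H a -> H (a *+ k).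
Proof. by move=> Ha; elim: k => [|k IHk]; rewrite ?mulr0n // mulrS; apply: subgroupD. Qed.

Definition coset_cover (s : seq G) := forall x, exists2 y, y \in s & H (x - y).

Lemma coset_cover_multiple s :
  coset_cover s -> forall y, exists2 m, (0 < m <= size s)%N & H (y *+ m).
Proof.
move=> cover y.
pose lands_in (k : 'I_(size s).+1) (i : 'I_(size s)) := H (y *+ k - nth 0 s i).
have [f fP] : exists f, forall k, lands_in k (f k).
  apply: choice => k; have [w ws Hw] := cover (y *+ k).
  by exists (Ordinal (etrans (index_mem w s) ws)); rewrite /lands_in nth_index.
have /injectivePn[i [j neq_ij fij]] : ~~ injectiveb f.
  by apply/injectiveP => /leq_card; rewrite !card_ord ltnn.
have Hij : H (y *+ i - y *+ j).
  by have := HB (fP i) (fP j); rewrite /lands_in fij opprB addrA subrK.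
have bound (k l : 'I_(size s).+1) : (0 < k - l <= size s)%N = (l < k)%N.
  by rewrite subn_gt0 andbC (leq_trans (leq_subr _ _)) // -ltnS.
case: (ltngtP i j) => [lt_ij|lt_ji|/val_inj eq_ij]; last by rewrite eq_ij eqxx in neq_ij.
- exists (j - i)%N; first by rewrite bound.
  by rewrite mulrnBr ?(ltnW lt_ij) // -opprB; apply: subgroupN.
- by exists (i - j)%N; rewrite ?bound // mulrnBr ?(ltnW lt_ji).
Qed.

Lemma divisible_coset_cover_full s :
  divisible G -> coset_cover s -> forall x, H x.
Proof.
move=> hdiv cover x; have [y <-] := hdiv x (size s)`! (fact_gt0 _).
have [m /andP[m_gt0 m_le] Hym] := coset_cover_multiple cover y.
have /dvdnP[q ->] : (m %| (size s)`!)%N by rewrite dvdn_fact ?m_gt0.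
by rewrite mulnC mulrnA; apply: subgroupMn.
Qed.

End FiniteIndexSubgroup.

Lemma divisible_nontrivial_uniq_seq (G : zmodType) :
  divisible G -> nontrivial G -> forall n, exists s : seq G, size s = n /\ uniq s.
Proof.
move=> hdiv [x0 /eqP x0_neq0]; elim=> [|n [s [size_s uniq_s]]]; first by exists [::].
have [[x xs]|all_in_s] := classic (exists x, x \notin s).
  by exists (x :: s); rewrite /= size_s xs uniq_s.
have cover : coset_cover (fun a : G => a = 0) s.
  move=> x; exists x; last exact: subrr.
  by apply: NNPP => /negP xs; apply: all_in_s; exists x.
have sub0 a b : a = 0 -> b = 0 -> a - b = 0 :> G by move=> -> ->; rewrite subr0.
by case: x0_neq0; apply: (divisible_coset_cover_full (erefl (0 : G)) sub0 hdiv cover).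
Qed.

Section TwistedConjugacy.

Variable G : zmodType.
Variable phi : G -> G.
Hypothesis phiD : forall x y : G, phi (x + y) = phi x + phi y.

Definition twisted_boundary (a : G) := exists z, a = z - phi z.

Lemma twisted_conjE x y : twisted_conj phi x y <-> twisted_boundary (x - y).
Proof.
split=> [[z ->]|[z e]]; first by exists z; rewrite addrAC addrK.
by exists z; apply/eqP; rewrite addrAC -subr_eq e.
Qed.

Lemma phiB x y : phi (x - y) = phi x - phi y.
Proof. by apply/eqP; rewrite eq_sym subr_eq -phiD subrK. Qed.

Lemma twisted_boundary0 : twisted_boundary 0.
Proof. by exists 0; rewrite -(subrr 0) phiB !subrr. Qed.

Lemma twisted_boundaryB a b :
  twisted_boundary a -> twisted_boundary b -> twisted_boundary (a - b).
Proof.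
by case=> [z ->] [w ->]; exists (z - w); rewrite phiB !opprD !opprK addrACA.
Qed.

Lemma reidemeister_finite_eq1 n :
  divisible G -> reidemeister phi (Some n) -> n = 1%N.
Proof.
move=> hdiv [s [size_s [pnc cover]]].
have all_conj x y : twisted_conj phi x y.
  apply/twisted_conjE; apply: (divisible_coset_cover_full twisted_boundary0
    twisted_boundaryB hdiv (s := s)) => z.
  by have [w ws /twisted_conjE] := cover z; exists w.
case: n size_s => [|[|n]] size_s //.
  by have [y] := cover 0; rewrite (size0nil size_s).
by have := pnc 0%N 1%N; rewrite size_s => /(_ isT isT (all_conj _ _)).
Qed.

End TwistedConjugacy.

Lemma reidemeister_opp (G : zmodType) :
  divisible G -> reidemeister (fun x : G => - x) (Some 1%N).
Proof.
move=> hdiv; exists [:: 0]; split=> //; split; first by case=> [|?] [|?].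
move=> x; exists 0; rewrite ?mem_head //.
by have [y <-] := hdiv x 2%N isT; exists y; rewrite addr0 opprK mulr2n.
Qed.

Lemma reidemeister_id_infinite (G : zmodType) :
  divisible G -> nontrivial G -> reidemeister (@id G) None.
Proof.
move=> hdiv hnt n; have [s [size_s uniq_s]] := divisible_nontrivial_uniq_seq hdiv hnt n.
exists s; split=> // i j lt_i lt_j [z e].
by apply/eqP; rewrite -(nth_uniq 0 lt_i lt_j uniq_s) e addrC addKr.
Qed.

Theorem proposition3 (G : zmodType) (hdiv : divisible G) (hnt : nontrivial G) :
  forall r : option nat, SpecR G r <-> (r = Some 1%N \/ r = None).
Proof.
move=> r; split.
- case: r => [n [phi [[phiD _] R_phi]]|]; last by right.
  by left; rewrite (reidemeister_finite_eq1 phiD hdiv R_phi).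
- case=> ->.
  + exists (fun x => - x); split; last exact: reidemeister_opp.
    split; first by move=> x y; rewrite opprD.
    by exists (fun x => - x) => x; rewrite opprK.
  + exists id; split; last exact: reidemeister_id_infinite.
    by split=> //; exists id.
Qed.
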